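(* Let $c\in\mathcal{C}$ be in addition piecewise twice differentiable with bounded second derivative. For each $n$, let $0=\theta_{n,0}<\theta_{n,1}<\dots<\theta_{n,k_n}=2\pi$ and let $c_n$ be the polygonal curve with vertices $c(\theta_{n,0}),c(\theta_{n,1}),\dots,c(\theta_{n,k_n})$, parametrized as the piecewise linear interpolation of $c$ at the parameters $\theta_{n,i}$. If $\max_i(\theta_{n,i+1}-\theta_{n,i})\to 0$ as $n\to\infty$, then $\mu_{c_n}$ converges weakly to $\mu_c$.
   Context: The plane is identified with $\mathbb{C}$, and $\mathbb{S}^1$ with $[0,2\pi)$ (or the unit circle in $\mathbb{C}$). $\mathcal{C}$ denotes the set of Lipschitz maps $c:\mathbb{S}^1\to\mathbb{C}$ with $c'(\theta)\neq 0$ for a.e. $\theta$. For $c\in\mathcal{C}$, the Gauss map is $T_c(\theta)=c'(\theta)/|c'(\theta)|$, and the length measure of $c$ is the positive Radon measure $\mu_c$ on $\mathbb{S}^1$ defined by $\mu_c(B)=\int_{T_c^{-1}(B)}|c'(\theta)|d\theta$ for Borel $B$. Weak convergence of measures on $\mathbb{S}^1$ means convergence of integrals against every continuous function on $\mathbb{S}^1$. *)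

From HB Require Import structures.
From mathcomp Require Import all_boot all_order all_algebra.
From mathcomp Require Import all_classical all_reals all_analysis.
Set Implicit Arguments. Unset Strict Implicit. Unset Printing Implicit Defensive.
Import Order.TTheory GRing.Theory Num.Theory.
Import numFieldNormedType.Exports.
Local Open Scope classical_set_scope.
Local Open Scope ring_scope.

(* The plane C is identified with R * R (real and imaginary parts).
   A closed curve c : S^1 -> C is represented as a 2*pi-periodic map R -> R * R,
   S^1 being identified with [0, 2*pi). *)

Section Defs.
Variable R : realType.

Definition eucl (p : R * R) : R := Num.sqrt (p.1 ^+ 2 + p.2 ^+ 2).
Definition pdist (p q : R * R) : R := eucl (p.1 - q.1, p.2 - q.2).

Definition unit_circle : set (R * R) := [set p | eucl p = 1].

Definition curve_derivable (c : R -> R * R) (t : R) : Prop :=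
  derivable (fun s => (c s).1) t 1 /\ derivable (fun s => (c s).2) t 1.
Definition dcurve (c : R -> R * R) (t : R) : R * R :=
  (derive1 (fun s => (c s).1) t, derive1 (fun s => (c s).2) t).

Definition gauss (c : R -> R * R) (t : R) : R * R :=
  ((dcurve c t).1 / eucl (dcurve c t), (dcurve c t).2 / eucl (dcurve c t)).

Definition in_C (c : R -> R * R) : Prop :=
  (forall t, c (t + 2 * pi) = c t) /\
  (exists L : R, forall s t, pdist (c s) (c t) <= L * `|s - t|) /\
  {ae (@lebesgue_measure R), forall t, `[0%R, (2 * pi)%R]%classic t ->
       curve_derivable c t /\ dcurve c t != (0, 0)}.

Definition length_measure (c : R -> R * R) (B : set (R * R)) : \bar R :=
  (\int[@lebesgue_measure R]_(t in `[0%R, (2 * pi)%R]%classic `&` gauss c @^-1` B)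
     (eucl (dcurve c t))%:E)%E.

(* Integral of f against mu_c, written via the image-measure formula
   \int f d mu_c = \int_0^{2 pi} f (T_c t) |c'(t)| dt. *)
Definition length_integral (c : R -> R * R) (f : R * R -> R) : \bar R :=
  (\int[@lebesgue_measure R]_(t in `[0%R, (2 * pi)%R]%classic)
     (f (gauss c t) * eucl (dcurve c t))%:E)%E.

Definition length_weak_cvg (cn : nat -> R -> R * R) (c : R -> R * R) : Prop :=
  forall f : R * R -> R, {within unit_circle, continuous f} ->
    (fun n => length_integral (cn n) f) @ \oo --> length_integral c f.

Definition piecewise_C2_bounded (c : R -> R * R) : Prop :=
  exists (m : nat) (a : nat -> R) (M : R),
    a 0%N = 0 /\ a m = 2 * pi /\ (forall j, (j < m)%N -> a j < a j.+1) /\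
    forall j, (j < m)%N -> forall t, a j < t < a j.+1 ->
      curve_derivable c t /\ curve_derivable (dcurve c) t /\
      eucl (dcurve (dcurve c) t) <= M.

Definition mod2pi (t : R) : R := t - 2 * pi * (Num.floor (t / (2 * pi)))%:~R.

Definition interp1 (g : R -> R) (k : nat) (th : nat -> R) (t : R) : R :=
  \sum_(i < k) (if (th i <= t < th i.+1)
                then g (th i) + (t - th i) / (th i.+1 - th i) * (g (th i.+1) - g (th i))
                else 0).

Definition polygon (c : R -> R * R) (k : nat) (th : nat -> R) (t : R) : R * R :=
  (interp1 (fun s => (c s).1) k th (mod2pi t), interp1 (fun s => (c s).2) k th (mod2pi t)).

Definition mesh (k : nat) (th : nat -> R) : R :=
  \big[Num.max/0]_(i < k) (th i.+1 - th i).

End Defs.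

(* The integrand f (T_c t) |c' t| of mu_c is G (c' t), where G v := f (v / |v|) |v|
   is continuous on the whole plane (G 0 = 0).  Off the countably many nodes, the
   derivative of the polygon c_n at t is the slope of the chord of c over the piece
   [th_{n,i}, th_{n,i+1}] containing t.  These slopes are bounded by the Lipschitz
   constant of c, and, where c is C^1 near t, they tend to c'(t) as the mesh tends to 0
   by the mean value theorem.  Bounded convergence on [0, 2 pi] concludes. *)

From HB Require Import structures.
From mathcomp Require Import all_boot all_order all_algebra.
From mathcomp Require Import all_classical all_reals all_analysis.
From mathcomp Require Import lra measurable_realfun.
Import Order.TTheory GRing.Theory Num.Theory.
Import numFieldNormedType.Exports.

Local Open Scope classical_set_scope.
Local Open Scope ring_scope.

Section EuclideanPlane.
Context {R : realType}.
Implicit Types (v : R * R) (f : R * R -> R).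

Lemma eucl_ge0 v : 0 <= eucl v.
Proof. exact: sqrtr_ge0. Qed.

Lemma eucl_eq0 v : eucl v = 0 -> v = (0, 0).
Proof.
case: v => x y /eqP; rewrite /eucl sqrtr_eq0 /= => xy0.
have /eqP : x ^+ 2 + y ^+ 2 = 0 by apply/eqP; rewrite eq_le xy0 addr_ge0 ?sqr_ge0.
by rewrite paddr_eq0 ?sqr_ge0 // !sqrf_eq0 => /andP[/eqP-> /eqP->].
Qed.

Lemma eucl0 : eucl (0, 0) = 0 :> R.
Proof. by rewrite /eucl /= expr0n /= addr0 sqrtr0. Qed.

Lemma eucl_gt0 [v] : v != (0, 0) -> 0 < eucl v.
Proof. by move=> v0; rewrite lt_def eucl_ge0 andbT; apply: contraNneq v0 => /eucl_eq0->. Qed.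

Lemma normr_fst_le_eucl v : `|v.1| <= eucl v.
Proof. by rewrite /eucl -sqrtr_sqr ler_sqrt ?addr_ge0 ?sqr_ge0 // lerDl sqr_ge0. Qed.

Lemma normr_snd_le_eucl v : `|v.2| <= eucl v.
Proof. by rewrite /eucl -sqrtr_sqr ler_sqrt ?addr_ge0 ?sqr_ge0 // lerDr sqr_ge0. Qed.

Lemma eucl_divr v d : 0 < d -> eucl (v.1 / d, v.2 / d) = eucl v / d.
Proof.
move=> d0; rewrite /eucl /= !expr_div_n -mulrDl sqrtrM ?addr_ge0 ?sqr_ge0 //.
by rewrite sqrtrV ?sqr_ge0 // sqrtr_sqr gtr0_norm.
Qed.

Lemma continuous_eucl : continuous (@eucl R).
Proof.
move=> v; apply: continuous_comp; last exact: sqrt_continuous.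
by apply: cvgD; apply: cvgM; [exact: cvg_fst|exact: cvg_fst|exact: cvg_snd|exact: cvg_snd].
Qed.

Definition normalize v : R * R := (v.1 / eucl v, v.2 / eucl v).

Lemma normalize_unit_circle [v] : v != (0, 0) -> unit_circle (normalize v).
Proof. by move=> v0; rewrite /unit_circle /= eucl_divr ?divff ?gt_eqF ?eucl_gt0. Qed.

Lemma normalize_continuous [v] : v != (0, 0) -> {for v, continuous normalize}.
Proof.
move=> /eucl_gt0/lt0r_neq0 e0; have eV := cvgV e0 (continuous_eucl v).
by apply: (@cvg_pair _ _ _ _ (nbhs _) (nbhs _)); apply: cvgM;
  [exact: cvg_fst|exact: eV|exact: cvg_snd|exact: eV].
Qed.

Lemma compact_unit_circle : compact (@unit_circle R).
Proof.
have closed_circle : closed (@unit_circle R).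
  exact: ((continuous_closedP (@eucl R)).1 continuous_eucl _ (@closed_eq R 1)).
apply: (subclosed_compact closed_circle
  (compact_setX (@segment_compact R (-1) 1) (@segment_compact R (-1) 1))).
move=> p circ_p; split; rewrite /= in_itv /= -ler_norml -circ_p.
  exact: normr_fst_le_eucl.
exact: normr_snd_le_eucl.
Qed.

Lemma bounded_on_unit_circle [f] : {within @unit_circle R, continuous f} ->
  exists2 B, 0 <= B & forall p, unit_circle p -> `|f p| <= B.
Proof.
move=> fc; have /pinfty_ex_gt0[B B_gt0 hB] :=
  compact_bounded (continuous_compact fc compact_unit_circle).
by exists B => [|p circ_p]; [exact: ltW|apply: hB; exists p].
Qed.

(* By definition of the Gauss map, f (gauss c t) * eucl (dcurve c t) is
   convertible to [homog_ext f (dcurve c t)]. *)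
Definition homog_ext f v : R := f (normalize v) * eucl v.

Lemma homog_ext0 f : homog_ext f (0, 0) = 0.
Proof. by rewrite /homog_ext eucl0 mulr0. Qed.

Lemma homog_ext_bound f B v : (forall p, unit_circle p -> `|f p| <= B) ->
  `|homog_ext f v| <= B * eucl v.
Proof.
move=> hB; have [->|v0] := eqVneq v (0, 0).
  by rewrite homog_ext0 eucl0 normr0 mulr0.
rewrite normrM (ger0_norm (eucl_ge0 v)) ler_wpM2r ?eucl_ge0 //.
exact/hB/normalize_unit_circle.
Qed.

Lemma continuous_homog_ext [f] : {within @unit_circle R, continuous f} ->
  continuous (homog_ext f).
Proof.
move=> fc v; have [v0|v0] := eqVneq v (0, 0).
  have [B _ hB] := bounded_on_unit_circle fc.
  have eB : B * eucl w @[w --> v] --> 0.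
    rewrite -(mulr0 B) -eucl0 -v0.
    by apply: cvgM; [exact: cvg_cst|exact: continuous_eucl].
  have eNB : - (B * eucl w) @[w --> v] --> 0 by rewrite -oppr0; exact: cvgN.
  rewrite /continuous_at {2}v0 homog_ext0; apply: (squeeze_cvgr _ eNB eB).
  by near=> w; rewrite -ler_norml; exact: homog_ext_bound.
rewrite /continuous_at /homog_ext; apply: cvgM; last exact: continuous_eucl.
have /subspace_continuousP fc' := fc.
apply: cvg_trans (fc' _ (normalize_unit_circle v0)).
move=> S /= hS; have h2 := normalize_continuous v0 _ hS.
have h1 : \forall w \near v, w != (0, 0).
  near=> w; apply: contra_eq_neq (eucl0 : eucl (0, 0) = 0 :> R) => <-.
  by apply: lt0r_neq0; near: w; exact: cvgr_gt (continuous_eucl v) _ (eucl_gt0 v0).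
apply: filterS2 h1 h2 => w w0; apply; exact: normalize_unit_circle.
Unshelve. all: by end_near.
Qed.

End EuclideanPlane.

Section Partition.
Context {R : realType} {a : nat -> R} {m : nat}.
Hypothesis a_incr : forall i, (i < m)%N -> a i < a i.+1.

Lemma partition_le i j : (i <= j <= m)%N -> a i <= a j.
Proof.
elim: j => [|j IHj]; first by rewrite leqn0 => /andP[/eqP-> _].
rewrite leq_eqVlt => /andP[/predU1P[->//|ij] jm].
have ijm : (i <= j <= m)%N by rewrite -ltnS ij ltnW.
exact: le_trans (IHj ijm) (ltW (a_incr _ jm)).
Qed.

Lemma partition_piece t : a 0%N <= t <= a m -> ~ range a t ->
  exists2 j, (j < m)%N & a j < t < a j.+1.
Proof.
elim: m a_incr => [|n IHn] incr /andP[t0 tn] tnode.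
  by case: tnode; exists 0%N => //; apply/eqP; rewrite eq_le t0.
have [tan|tan] := leP t (a n).
  have incr' i : (i < n)%N -> a i < a i.+1 by move=> ?; apply: incr; rewrite ltnW.
  have t0n : a 0%N <= t <= a n by rewrite t0 tan.
  have [j jn ajt] := IHn incr' t0n tnode.
  by exists j => //; rewrite ltnW.
exists n => //; rewrite tan lt_neqAle tn andbT.
by apply: contra_not_neq tnode => ->; exists n.+1.
Qed.

Lemma partition_piece_uniq i j t : (i < m)%N -> (j < m)%N ->
  a i <= t < a i.+1 -> a j <= t < a j.+1 -> i = j.
Proof.
move=> im jm /andP[ait tai] /andP[ajt taj].
have apart p q : (p < q < m)%N -> t < a p.+1 -> a q <= t -> False.
  move=> /andP[pq qm] tp qt.
  have apq : a p.+1 <= a q by apply: partition_le; rewrite pq ltnW.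
  by have := le_lt_trans (le_trans apq qt) tp; rewrite ltxx.
have [ij|ji|//] := ltngtP i j; first by case: (apart i j); rewrite ?ij.
by case: (apart j i); rewrite ?ji.
Qed.

End Partition.

Definition chord [R : realType] (c : R -> R * R) (u z : R) : R * R :=
  (((c z).1 - (c u).1) / (z - u), ((c z).2 - (c u).2) / (z - u)).

Lemma derive1_near_affine [R : realType] (g : R -> R) (x0 u q t : R) :
  (\forall s \near t, g s = x0 + (s - u) * q) -> derive1 g t = q.
Proof.
move=> near_g; rewrite derive1E (near_eq_derive _ near_g).
have affine_q : is_derive t 1 (fun s => x0 + (s - u) * q) q.
  apply: is_derive_eq.
  by rewrite !scaler0 !add0r mul1r subr0 ![_ *: _]/GRing.scale /= mulr1.
by case: affine_q.
Qed.

Lemma eucl_chord_le [R : realType] (c : R -> R * R) (L u z : R) :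
  (forall s t, pdist (c s) (c t) <= L * `|s - t|) -> u < z ->
  eucl (chord c u z) <= L.
Proof.
move=> c_lip uz; have zu_gt0 : 0 < z - u by rewrite subr_gt0.
rewrite /chord (eucl_divr ((c z).1 - (c u).1, (c z).2 - (c u).2) _ zu_gt0).
rewrite ler_pdivrMr //.
by have := c_lip z u; rewrite gtr0_norm.
Qed.

Lemma mod2pi_id [R : realType] (t : R) : 0 <= t < 2 * pi -> mod2pi t = t.
Proof.
move=> /andP[t0 t2pi]; have pi2_gt0 : 0 < 2 * pi :> R by rewrite mulr_gt0 ?pi_gt0.
rewrite /mod2pi (@floor_def _ _ 0) ?mulr0 ?subr0 //.
by rewrite add0r mulr0z mulr1z divr_ge0 ?(ltW pi2_gt0) // ltr_pdivrMr // mul1r.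
Qed.

Section Polygon.
Context {R : realType} {c : R -> R * R} {k : nat} {th : nat -> R}.
Hypotheses (th0 : th 0%N = 0) (thk : th k = 2 * pi).
Hypothesis th_incr : forall i, (i < k)%N -> th i < th i.+1.

Lemma interp1_piece g i t : (i < k)%N -> th i <= t < th i.+1 ->
  interp1 g k th t = g (th i) + (t - th i) / (th i.+1 - th i) * (g (th i.+1) - g (th i)).
Proof.
move=> ik ht; rewrite /interp1 (bigD1 (Ordinal ik)) //= ht big1 ?addr0 //.
move=> [j jk] /= /eqP ji; case: ifP => // hj; exfalso; apply: ji; apply: val_inj => /=.
exact: partition_piece_uniq th_incr _ _ _ jk ik hj ht.
Qed.

Lemma polygon_near_piece i t : (i < k)%N -> th i < t < th i.+1 ->
  \forall s \near t, polygon c k th s =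
    ((c (th i)).1 + (s - th i) * (chord c (th i) (th i.+1)).1,
     (c (th i)).2 + (s - th i) * (chord c (th i) (th i.+1)).2).
Proof.
move=> ik ht.
have thi_ge0 : 0 <= th i.
  by rewrite -th0; apply: (partition_le th_incr); rewrite leq0n ltnW.
have thi_le : th i.+1 <= 2 * pi.
  by rewrite -thk; apply: (partition_le th_incr); rewrite ik leqnn.
near=> s.
have /andP[its sti] : th i < s < th i.+1.
  by near: s; apply: near_in_itvoo; rewrite in_itv.
rewrite /polygon mod2pi_id; last by rewrite (le_trans thi_ge0 (ltW its)) (lt_le_trans sti).
rewrite !(interp1_piece _ _ _ ik) ?(ltW its) ?sti //.
by congr (_ + _, _ + _); rewrite /= mulrAC mulrA.
Unshelve. all: by end_near.
Qed.

Lemma dcurve_polygon i t : (i < k)%N -> th i < t < th i.+1 ->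
  dcurve (polygon c k th) t = chord c (th i) (th i.+1).
Proof.
move=> ik ht; have near_t := polygon_near_piece _ _ ik ht.
by congr (_, _); apply: derive1_near_affine; apply: filterS near_t => s ->.
Qed.

Lemma dcurve_polygon_off_nodes t : 0 <= t <= 2 * pi -> ~ range th t ->
  exists2 i, (i < k)%N &
    \forall s \near t, dcurve (polygon c k th) s = chord c (th i) (th i.+1).
Proof.
rewrite -{1}th0 -thk => t02pi /(partition_piece th_incr _ t02pi)[i ik ht].
exists i => //; near=> s; apply: dcurve_polygon => //.
by near: s; apply: near_in_itvoo; rewrite in_itv.
Unshelve. all: by end_near.
Qed.

Lemma continuous_dcurve_polygon t : 0 <= t <= 2 * pi -> ~ range th t ->
  {for t, continuous (dcurve (polygon c k th))}.
Proof.
by move=> t02pi /(dcurve_polygon_off_nodes _ t02pi)[i _]; exact: near_cst_continuous.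
Qed.

Lemma eucl_dcurve_polygon_le L t :
  (forall s t, pdist (c s) (c t) <= L * `|s - t|) ->
  0 <= t <= 2 * pi -> ~ range th t -> eucl (dcurve (polygon c k th) t) <= L.
Proof.
move=> c_lip t02pi /(dcurve_polygon_off_nodes _ t02pi)[i ik /nbhs_singleton->].
exact/eucl_chord_le/th_incr.
Qed.

End Polygon.

Lemma range_countable (T : Type) (a : nat -> T) : countable (range a).
Proof. exact: sub_countable (card_image_le a setT) (countableP _). Qed.

Lemma countableU (T : Type) (A B : set T) :
  countable A -> countable B -> countable (A `|` B).
Proof.
move=> cA cB; have -> : A `|` B = \bigcup_(b in [set: bool]) (if b then A else B).
  by apply/seteqP; split => [x [Ax|Bx]|x [[] _ ?]]; by [exists true|exists false|left|right].
by apply: bigcup_countable => [|[]]; [exact: countableP|..].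
Qed.

Section Integration.
Context {R : realType}.
Local Notation mu := (@lebesgue_measure R).

Lemma countable_measurableR [Z : set R] : countable Z -> measurable Z.
Proof. by apply: countable_measurable => x; exact: measurable_set1. Qed.

Lemma countable_ae [Z : set R] [P : R -> Prop] : countable Z ->
  (forall x, ~ Z x -> P x) -> {ae mu, forall x, P x}.
Proof.
move=> cZ ZP; exists Z; split.
- exact: countable_measurableR.
- exact: countable_lebesgue_measure0.
- by move=> x /= nPx; apply: contrapT => /ZP.
Qed.

Lemma cocountable_continuous_measurable_fun [D Z : set R] [h : R -> R] :
  measurable D -> countable Z ->
  (forall x, D x -> ~ Z x -> {for x, continuous h}) -> measurable_fun D h.
Proof.
move=> mD cZ h_cont; have mZ := countable_measurableR cZ.
rewrite -(setUIDK D Z); apply/measurable_funU; [exact: measurableI|exact: measurableD|split].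
- move=> _ Y mY; apply: countable_measurableR; apply: sub_countable cZ.
  by apply: subset_card_le => x [[]].
- apply: subspace_continuous_measurable_fun; first exact: measurableD.
  rewrite continuous_subspace_in => x /set_mem[Dx nZx].
  exact: continuous_subspaceT_for (h_cont x Dx nZx).
Qed.

Lemma cocountable_bounded_cvg_integral [D Z : set R] (f_ : nat -> R -> R)
    (f : R -> R) (C : R) :
  measurable D -> (mu D < +oo)%E -> countable Z ->
  (forall x, D x -> ~ Z x -> [/\ forall n, {for x, continuous (f_ n)},
    {for x, continuous f}, f_ n x @[n --> \oo] --> f x & forall n, `|f_ n x| <= C]) ->
  (\int[mu]_(x in D) (f_ n x)%:E)%E @[n --> \oo] --> (\int[mu]_(x in D) (f x)%:E)%E.
Proof.
move=> mD muD cZ good.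
have mf_ n : measurable_fun D (EFin \o f_ n).
  apply/measurable_EFinP; apply: (cocountable_continuous_measurable_fun mD cZ) => x Dx nZx.
  by have [] := good x Dx nZx.
have mf : measurable_fun D (EFin \o f).
  apply/measurable_EFinP; apply: (cocountable_continuous_measurable_fun mD cZ) => x Dx nZx.
  by have [] := good x Dx nZx.
have intC : mu.-integrable D (cst C%:E).
  apply/integrableP; split; first exact: measurable_cst.
  rewrite (eq_integral (cst `|C|%:E)) ?integral_cst //.
  by apply: lte_mul_pinfty; rewrite ?lee_fin.
have [] := @dominated_convergence _ (measurableTypeR R) R mu D mD _ _ _ mf_ mf _ intC.
- apply: (countable_ae cZ) => x nZx Dx; have [_ _ f_f _] := good x Dx nZx.
  by apply: cvg_EFin; [near=> n|].
- apply: (countable_ae cZ) => x nZx n Dx; have [_ _ _ f_C] := good x Dx nZx.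
  by rewrite lee_fin.
- by move=> _ _.
Unshelve. all: by end_near.
Qed.

End Integration.

Section Convergence.
Context {R : realType}.

Lemma cvg_difference_quotient (g : R -> R) (t : R) (u z : nat -> R) :
  (\forall s \near t, derivable g s 1) -> {for t, continuous (derive1 g)} ->
  (forall n, u n < t < z n) -> z n - u n @[n --> \oo] --> 0 ->
  (g (z n) - g (u n)) / (z n - u n) @[n --> \oo] --> derive1 g t.
Proof.
move=> g_der dg_cont utz zu0; apply/cvgrPdist_lt => e e_gt0.
have /nbhs_ballP[r r_gt0 near_t] :
    \forall s \near t, derivable g s 1 /\ `|derive1 g t - derive1 g s| < e.
  have /cvgrPdist_lt/(_ e e_gt0) dg_near := dg_cont.
  by apply: filterS2 g_der dg_near => s; split.
near=> n; have /andP[ut tz] := utz n.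
have zu_r : z n - u n < r.
  by apply: le_lt_trans (ler_norm _) _; near: n; exact: cvgr0_norm_lt.
have near_uz x : u n <= x <= z n ->
    derivable g x 1 /\ `|derive1 g t - derive1 g x| < e.
  move=> /andP[ux xz]; apply: near_t; rewrite /ball /= ltr_norml.
  by apply/andP; split; lra.
have [x /[!in_itv]/andP[ux xz] ->] :
    exists2 x, x \in `]u n, z n[ & g (z n) - g (u n) = 'D_1 g x * (z n - u n).
  apply: MVT; first exact: lt_trans tz.
    move=> x /[!in_itv]/andP[ux xz]; apply/derivableP.
    by have [] := near_uz x; rewrite ?ltW.
  apply: derivable_within_continuous => x /[!in_itv] uxz.
  by have [] := near_uz x uxz.
rewrite mulfK ?subr_eq0 ?gt_eqF ?(lt_trans ut tz) // -derive1E.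
by have [] := near_uz x; rewrite ?ltW.
Unshelve. all: by end_near.
Qed.

Lemma cvg_chord (c : R -> R * R) (t : R) (u z : nat -> R) :
  (\forall s \near t, curve_derivable c s) -> {for t, continuous (dcurve c)} ->
  (forall n, u n < t < z n) -> z n - u n @[n --> \oo] --> 0 ->
  chord c (u n) (z n) @[n --> \oo] --> dcurve c t.
Proof.
move=> c_der dc_cont utz zu0.
apply: (@cvg_pair _ _ _ _ (nbhs (dcurve c t).1) (nbhs (dcurve c t).2)).
- apply: cvg_difference_quotient utz zu0; first by apply: filterS c_der => s [].
  by apply: (continuous_comp (g := fst) dc_cont); exact: cvg_fst.
- apply: cvg_difference_quotient utz zu0; first by apply: filterS c_der => s [].
  by apply: (continuous_comp (g := snd) dc_cont); exact: cvg_snd.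
Qed.

Lemma piecewise_C2_C1_off_nodes [c : R -> R * R] : piecewise_C2_bounded c ->
  exists a : nat -> R, forall t, 0 <= t <= 2 * pi -> ~ range a t ->
    (\forall s \near t, curve_derivable c s) /\ {for t, continuous (dcurve c)}.
Proof.
move=> [m [a [M [a0 [am [a_incr c_C2]]]]]]; exists a => t.
rewrite -{1}a0 -am => t02pi /(partition_piece a_incr _ t02pi)[j jm ht].
have near_piece : \forall s \near t, s \in `]a j, a j.+1[.
  by apply: near_in_itvoo; rewrite in_itv.
split; first by apply: filterS near_piece => s /[!in_itv] /(c_C2 _ jm)[].
have [_ [[dc1 dc2] _]] := c_C2 _ jm _ ht.
apply: (@cvg_pair _ _ _ _ (nbhs (dcurve c t).1) (nbhs (dcurve c t).2)).
  exact: differentiable_continuous ((derivable1_diffP _ _).1 dc1).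
exact: differentiable_continuous ((derivable1_diffP _ _).1 dc2).
Qed.

Lemma step_le_mesh (k : nat) (th : nat -> R) i :
  (i < k)%N -> th i.+1 - th i <= mesh k th.
Proof. by move=> ik; rewrite /mesh (bigD1 (Ordinal ik)) //= le_max lexx. Qed.

Lemma cvg_dcurve_polygon [c : R -> R * R] [k : nat -> nat] [th : nat -> nat -> R] [t : R] :
  (forall n, th n 0%N = 0) -> (forall n, th n (k n) = 2 * pi) ->
  (forall n i, (i < k n)%N -> th n i < th n i.+1) ->
  mesh (k n) (th n) @[n --> \oo] --> 0 ->
  0 <= t <= 2 * pi -> (forall n, ~ range (th n) t) ->
  (\forall s \near t, curve_derivable c s) -> {for t, continuous (dcurve c)} ->
  dcurve (polygon c (k n) (th n)) t @[n --> \oo] --> dcurve c t.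
Proof.
move=> th0 thk th_incr mesh0 t02pi t_off c_der dc_cont.
have /choice[i piece_i] : forall n, exists i, (i < k n)%N /\ th n i < t < th n i.+1.
  move=> n; rewrite -(th0 n) -(thk n) in t02pi.
  by have [j] := partition_piece (th_incr n) _ t02pi (t_off n); exists j.
have dcurve_chord n :
    dcurve (polygon c (k n) (th n)) t = chord c (th n (i n)) (th n (i n).+1).
  by have [ik ht] := piece_i n; exact: dcurve_polygon (th0 n) (thk n) (th_incr n) _ _ ik ht.
under eq_fun do rewrite dcurve_chord.
apply: cvg_chord c_der dc_cont _ _ => [n|]; first exact: (piece_i n).2.
apply: squeeze_cvgr mesh0; [|exact: cvg_cst].
near=> n; have [ik /andP[lt_t t_lt]] := piece_i n.
by rewrite subr_ge0 (ltW (lt_trans lt_t t_lt)) step_le_mesh.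
Unshelve. all: by end_near.
Qed.

End Convergence.

Theorem proposition2p12 (R : realType) (c : R -> R * R)
  (hC : in_C c) (hpw : piecewise_C2_bounded c)
  (k : nat -> nat) (th : nat -> nat -> R)
  (hth0 : forall n, th n 0%N = 0)
  (hthk : forall n, th n (k n) = 2 * pi)
  (hinc : forall n i, (i < k n)%N -> th n i < th n i.+1)
  (hmesh : (fun n => mesh (k n) (th n)) @ \oo --> 0) :
  length_weak_cvg (fun n => polygon c (k n) (th n)) c.
Proof.
move=> f f_cont; have [B B_ge0 f_le] := bounded_on_unit_circle f_cont.
have [_ [[L c_lip] _]] := hC.
have [a c_C1] := piecewise_C2_C1_off_nodes hpw.
pose Z := range a `|` \bigcup_n range (th n).
have cZ : countable Z.
  apply: countableU; first exact: range_countable.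
  by apply: bigcup_countable => [|n _]; [exact: countableP|exact: range_countable].
apply: (cocountable_bounded_cvg_integral
  (fun n t => homog_ext f (dcurve (polygon c (k n) (th n)) t))
  (fun t => homog_ext f (dcurve c t)) (B * L) (measurable_itv _) _ cZ).
  by rewrite lebesgue_measure_itv; case: ifP => _; rewrite ?ltry.
move=> x; rewrite /= in_itv => x02pi nZx.
have xa : ~ range a x by move=> xa; apply: nZx; left.
have x_off n : ~ range (th n) x by move=> xth; apply: nZx; right; exists n.
have [c_der dc_cont] := c_C1 x x02pi xa.
have G_cont := continuous_homog_ext f_cont.
split=> [n||| n].
- apply: continuous_comp (G_cont _).
  exact: continuous_dcurve_polygon (hth0 n) (hthk n) (hinc n) _ x02pi (x_off n).
- exact: continuous_comp dc_cont (G_cont _).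
- exact: cvg_comp
    (cvg_dcurve_polygon hth0 hthk hinc hmesh x02pi x_off c_der dc_cont) (G_cont _).
- apply: le_trans (homog_ext_bound _ _ _ f_le) _; rewrite ler_wpM2l //.
  exact: eucl_dcurve_polygon_le (hth0 n) (hthk n) (hinc n) _ _ c_lip x02pi (x_off n).
Qed.
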